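(* Let $f\in\mathcal A_C$ and $g\in L^1$, and define $F(x)=\int_{-\infty}^xf$ and $G(x)=\int_{-\infty}^xg$. Then $f*G\in C^0(\overline{\mathbb R})$ and $f*G(x)=F*g(x)$ for all $x\in\mathbb R$, where $F*g(x)=\int_{-\infty}^\infty F(x-y)g(y)\,dy$ is a Lebesgue integral.
   Context: $C^0(\overline{\mathbb R})$: continuous $F:\mathbb R\to\mathbb R$ with finite limits $F(\pm\infty)$. $\mathcal B_C=\{F\in C^0(\overline{\mathbb R}):F(-\infty)=0\}$; $\mathcal A_C=\{f\in\mathcal D'(\mathbb R): f=F'\text{ (distributional derivative) for some } F\in\mathcal B_C\}$, the primitive being unique, $\int_a^bf=F(b)-F(a)$. Note $G$ is absolutely continuous and of bounded variation. For $h\in\mathcal A_C$ with primitive $H$ and $g$ of bounded variation, $\int_{-\infty}^\infty hg=H(\infty)g(\infty)-\int_{-\infty}^\infty H\,dg$ (Henstock–Stieltjes). For $f\in\mathcal A_C$ with primitive $F$, $f(x-\cdot)$ is the element of $\mathcal A_C$ with primitive $y\mapsto F(\infty)-F(x-y)$, and for $G$ of bounded variation $f*G(x)=\int_{-\infty}^\infty f(x-y)G(y)\,dy$ is the product integral of $f(x-\cdot)$ and $G$. *)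

From Stdlib Require Import Reals Lra List.
Open Scope R_scope.

Definition lim_pinf (F : R -> R) (l : R) : Prop :=
  forall eps, 0 < eps -> exists M, forall x, M < x -> Rabs (F x - l) < eps.
Definition lim_minf (F : R -> R) (l : R) : Prop :=
  forall eps, 0 < eps -> exists M, forall x, x < M -> Rabs (F x - l) < eps.

Definition C0bar (F : R -> R) : Prop :=
  continuity F /\ (exists l, lim_pinf F l) /\ (exists l, lim_minf F l).

Definition in_BC (F : R -> R) : Prop := C0bar F /\ lim_minf F 0.

(* a division is a list of (left endpoint, right endpoint, tag) *)
Fixpoint chain (a b : R) (l : list (R * R * R)) : Prop :=
  match l with
  | nil => a = b
  | (u, v, _) :: l' => u = a /\ u < v /\ chain v b l'
  end.

Definition st_sum (H G : R -> R) (l : list (R * R * R)) : R :=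
  fold_right (fun p s => let '(u, v, t) := p in H t * (G v - G u) + s) 0 l.

Definition henstock_fine (delta : R -> R) (l : list (R * R * R)) : Prop :=
  forall u v t, In (u, v, t) l ->
    u <= t <= v /\ t - delta t < u /\ v < t + delta t.

Definition mcshane_fine (a b : R) (delta : R -> R) (l : list (R * R * R)) : Prop :=
  forall u v t, In (u, v, t) l ->
    a <= t <= b /\ t - delta t < u /\ v < t + delta t.

Definition HS_int (H G : R -> R) (a b I : R) : Prop :=
  forall eps, 0 < eps -> exists delta : R -> R, (forall x, 0 < delta x) /\
    forall l, chain a b l -> henstock_fine delta l ->
      Rabs (st_sum H G l - I) < eps.

(* McShane integral over [a,b] (= Lebesgue integral on compact intervals) *)
Definition McS_int (g : R -> R) (a b I : R) : Prop :=
  forall eps, 0 < eps -> exists delta : R -> R, (forall x, 0 < delta x) /\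
    forall l, chain a b l -> mcshane_fine a b delta l ->
      Rabs (st_sum g (fun x => x) l - I) < eps.

Definition HS_int_R (H G : R -> R) (I : R) : Prop :=
  (forall a b, a <= b -> exists J, HS_int H G a b J) /\
  forall eps, 0 < eps -> exists M, forall a b J,
    a < - M -> M < b -> HS_int H G a b J -> Rabs (J - I) < eps.

Definition L1 (g : R -> R) : Prop :=
  (forall a b, a <= b -> exists J, McS_int g a b J) /\
  exists B, forall a b J, a <= b -> McS_int (fun y => Rabs (g y)) a b J -> J <= B.

Definition Leb_int_R (g : R -> R) (I : R) : Prop :=
  L1 g /\
  forall eps, 0 < eps -> exists M, forall a b J,
    a < - M -> M < b -> McS_int g a b J -> Rabs (J - I) < eps.

Definition Leb_int_lower (g : R -> R) (x I : R) : Prop :=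
  forall eps, 0 < eps -> exists M, forall a J,
    a < - M -> a <= x -> McS_int g a x J -> Rabs (J - I) < eps.

(* f * G (x) = v, where f in A_C is given through its primitive F in B_C:
   the product integral of f(x - .) (primitive y |-> F(oo) - F(x-y)) and G,
   i.e.  H(oo) G(oo) - int_R H dG  with H(oo) = F(oo). *)
Definition conv_AC_BV (F G : R -> R) (x v : R) : Prop :=
  exists Finf Ginf, lim_pinf F Finf /\ lim_pinf G Ginf /\
    HS_int_R (fun y => Finf - F (x - y)) G (Finf * Ginf - v).

(* Let N be a primitive of |g| and, for each x, P x a primitive of
   y |-> F(x-y) g(y) on compact intervals; the latter exists because F is
   bounded and uniformly continuous, by the Saks-Henstock lemma and the Cauchy
   criterion on common refinements.  Since |P x v - P x u| <= sup|F| (N v - N u)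
   and the increments of N are bounded, P x has limits at both ends, uniformly
   in x, and their difference is F*g(x).  On [a, b] the Saks-Henstock lemma
   turns the Stieltjes sums of F(oo) - F(x-.) against G into
   F(oo) (G b - G a) - int_a^b F(x-y) g(y) dy, so letting a -> -oo and b -> oo
   gives f*G(x) = F*g(x).  Continuity and the limits at +-oo follow from
   |int phi g - int psi g| <= sup|phi - psi| (N b - N a) on a large fixed
   interval. *)

From Stdlib Require Import Reals Lra Lia List.
From Stdlib Require Import Classical_Prop IndefiniteDescription.
Open Scope R_scope.

Definition lsum {A : Type} (f : A -> R) (l : list A) : R :=
  fold_right (fun x s => f x + s) 0 l.

Section ListSums.
Context {A : Type}.
Implicit Types (f h : A -> R) (l : list A).

Lemma lsum_app f l1 l2 : lsum f (l1 ++ l2) = lsum f l1 + lsum f l2.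
Proof. induction l1 as [|x l IH]; simpl; [lra | rewrite IH; lra]. Qed.

Lemma lsum_map {B : Type} (f : B -> R) (m : A -> B) l :
  lsum f (map m l) = lsum (fun x => f (m x)) l.
Proof. induction l as [|x l IH]; simpl; [lra | rewrite IH; lra]. Qed.

Lemma lsum_ext f h l : (forall x, In x l -> f x = h x) -> lsum f l = lsum h l.
Proof.
  induction l as [|x l IH]; simpl; intros E; [lra|].
  rewrite (E x (or_introl eq_refl)), IH; auto.
Qed.

Lemma lsum_le f h l : (forall x, In x l -> f x <= h x) -> lsum f l <= lsum h l.
Proof.
  induction l as [|x l IH]; simpl; intros E; [lra|].
  pose proof (E x (or_introl eq_refl)). pose proof (IH (fun y Hy => E y (or_intror Hy))).
  lra.
Qed.

Lemma lsum_nonneg f l : (forall x, In x l -> 0 <= f x) -> 0 <= lsum f l.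
Proof.
  induction l as [|x l IH]; simpl; intros E; [lra|].
  pose proof (E x (or_introl eq_refl)). pose proof (IH (fun y Hy => E y (or_intror Hy))).
  lra.
Qed.

Lemma lsum_plus f h l : lsum (fun x => f x + h x) l = lsum f l + lsum h l.
Proof. induction l as [|x l IH]; simpl; [lra | rewrite IH; lra]. Qed.

Lemma lsum_minus f h l : lsum (fun x => f x - h x) l = lsum f l - lsum h l.
Proof. induction l as [|x l IH]; simpl; [lra | rewrite IH; lra]. Qed.

Lemma lsum_scal c f l : lsum (fun x => c * f x) l = c * lsum f l.
Proof. induction l as [|x l IH]; simpl; [lra | rewrite IH; lra]. Qed.

Lemma lsum_abs f l : Rabs (lsum f l) <= lsum (fun x => Rabs (f x)) l.
Proof.
  induction l as [|x l IH]; simpl; [rewrite Rabs_R0; lra|].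
  eapply Rle_trans; [apply Rabs_triang | lra].
Qed.

End ListSums.

Lemma eq_of_dist_lt x y : (forall e, 0 < e -> Rabs (x - y) < e) -> x = y.
Proof.
  intros H. apply NNPP; intros Hxy.
  assert (Hp : 0 < Rabs (x - y)) by (apply Rabs_pos_lt; lra).
  specialize (H _ Hp); lra.
Qed.

Lemma Rabs_le_between x e : Rabs x <= e -> - e <= x <= e.
Proof.
  intros H. pose proof (Rle_abs x). pose proof (Rle_abs (- x)). rewrite Rabs_Ropp in *. lra.
Qed.

Lemma le_of_le_add_eps x y : (forall e, 0 < e -> x <= y + e) -> x <= y.
Proof. intros H. apply Rnot_lt_le; intros Hlt. specialize (H ((x - y) / 2)). lra. Qed.

Lemma div_succ_pos K e : 0 <= K -> 0 < e -> 0 < e / (K + 1).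
Proof. intros; apply Rdiv_lt_0_compat; lra. Qed.

Lemma mul_div_succ_lt K e : 0 <= K -> 0 < e -> K * (e / (K + 1)) < e.
Proof.
  intros HK He. apply Rlt_le_trans with ((K + 1) * (e / (K + 1))).
  - apply Rmult_lt_compat_r; [apply div_succ_pos|]; lra.
  - right; field; lra.
Qed.

(** * Tagged divisions *)

Definition increment (P : R -> R) (p : R * R * R) : R :=
  let '(u, v, _) := p in P v - P u.

Definition stieltjes_term (H P : R -> R) (p : R * R * R) : R :=
  let '(u, v, t) := p in H t * (P v - P u).

Lemma st_sum_lsum H P l : st_sum H P l = lsum (stieltjes_term H P) l.
Proof. induction l as [|[[u v] t] l IH]; simpl; [reflexivity | rewrite IH; reflexivity]. Qed.

Lemma chain_le a b l : chain a b l -> a <= b.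
Proof.
  revert a; induction l as [|[[u v] t] l IH]; simpl; intros a H; [lra|].
  destruct H as [-> [Huv Hl]]. apply IH in Hl; lra.
Qed.

Lemma chain_in a b l u v t : chain a b l -> In (u, v, t) l -> a <= u /\ u < v /\ v <= b.
Proof.
  revert a; induction l as [|[[u' v'] t'] l IH]; simpl; intros a H Hi; [contradiction|].
  destruct H as [-> [Huv Hl]]. destruct Hi as [Hi|Hi].
  - injection Hi as <- <- <-. apply chain_le in Hl; lra.
  - destruct (IH _ Hl Hi); lra.
Qed.

Lemma chain_app a b c l1 l2 : chain a b l1 -> chain b c l2 -> chain a c (l1 ++ l2).
Proof.
  revert a; induction l1 as [|[[u v] t] l IH]; simpl; intros a H1 H2.
  - subst; auto.
  - destruct H1 as [-> [Huv Hl]]. eauto.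
Qed.

Lemma chain_degenerate a l : chain a a l -> l = nil.
Proof.
  destruct l as [|[[u v] t] l]; simpl; auto.
  intros [-> [Huv Hl]]. apply chain_le in Hl; lra.
Qed.

Lemma lsum_increment_chain P a b l : chain a b l -> lsum (increment P) l = P b - P a.
Proof.
  revert a; induction l as [|[[u v] t] l IH]; simpl; intros a H.
  - subst; lra.
  - destruct H as [-> [Huv Hl]]. rewrite (IH _ Hl); lra.
Qed.

Lemma henstock_fine_mono (d1 d2 : R -> R) l :
  (forall x, d1 x <= d2 x) -> henstock_fine d1 l -> henstock_fine d2 l.
Proof.
  intros H Hf u v t Hi. destruct (Hf u v t Hi) as [H1 [H2 H3]]. specialize (H t).
  repeat split; lra.
Qed.

Lemma mcshane_fine_mono a b (d1 d2 : R -> R) l :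
  (forall x, d1 x <= d2 x) -> mcshane_fine a b d1 l -> mcshane_fine a b d2 l.
Proof.
  intros H Hf u v t Hi. destruct (Hf u v t Hi) as [H1 [H2 H3]]. specialize (H t).
  repeat split; lra.
Qed.

Lemma mcshane_fine_widen a b a' b' d l :
  a' <= a -> b <= b' -> mcshane_fine a b d l -> mcshane_fine a' b' d l.
Proof. intros Ha Hb Hf u v t Hi. destruct (Hf u v t Hi) as [H1 [H2 H3]]. repeat split; lra. Qed.

Lemma mcshane_fine_app a b d l1 l2 :
  mcshane_fine a b d l1 -> mcshane_fine a b d l2 -> mcshane_fine a b d (l1 ++ l2).
Proof. intros H1 H2 u v t Hi. apply in_app_or in Hi as [Hi|Hi]; auto. Qed.

Lemma henstock_fine_mcshane a b d l :
  chain a b l -> henstock_fine d l -> mcshane_fine a b d l.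
Proof.
  intros Hc Hf u v t Hi. destruct (Hf u v t Hi) as [H1 [H2 H3]].
  destruct (chain_in a b l u v t Hc Hi). repeat split; lra.
Qed.

Lemma Rmin_gauge_pos (d1 d2 : R -> R) :
  (forall x, 0 < d1 x) -> (forall x, 0 < d2 x) -> forall x, 0 < Rmin (d1 x) (d2 x).
Proof. intros H1 H2 x; apply Rmin_glb_lt; auto. Qed.

(* The supremum c of the points reachable by a fine division is reached, via the
   piece [(x, c, c)], and cannot lie below [b], via the piece [(c, c', c)]. *)
Lemma cousin (d : R -> R) a b : (forall x, 0 < d x) -> a <= b ->
  exists l, chain a b l /\ henstock_fine d l.
Proof.
  intros Hd Hab.
  set (S := fun x => a <= x <= b /\ exists l, chain a x l /\ henstock_fine d l).
  assert (Sa : S a) by (split; [lra | exists nil; split; [reflexivity | intros u v t []]]).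
  assert (Hbound : bound S) by (exists b; intros x [Hx _]; lra).
  destruct (completeness S Hbound (ex_intro _ a Sa)) as [c [Hub Hlub]].
  assert (Hac : a <= c) by (apply Hub, Sa).
  assert (Hcb : c <= b) by (apply Hlub; intros x [Hx _]; lra).
  assert (Hdc := Hd c).
  assert (Hextend : forall x y l, chain a x l -> henstock_fine d l ->
            x < y -> x <= c <= y -> c - d c < x -> y < c + d c ->
            chain a y (l ++ (x, y, c) :: nil) /\ henstock_fine d (l ++ (x, y, c) :: nil)).
  { intros x y l Hl Hf Hxy Hc1 Hc2 Hc3. split.
    - eapply chain_app; [exact Hl|]. simpl; repeat split; lra.
    - intros u v t Hi. apply in_app_or in Hi as [Hi|[Hi|[]]]; [apply Hf; auto|].
      injection Hi as <- <- <-. repeat split; lra. }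
  assert (Hx : exists x, S x /\ c - d c < x).
  { apply NNPP; intros Hn. assert (c <= c - d c); [|lra].
    apply Hlub. intros x Sx. apply Rnot_lt_le. intros Hlt. apply Hn. eauto. }
  destruct Hx as [x [[Hx [l [Hl Hf]]] Hxc]].
  assert (Hxc' : x <= c) by (apply Hub; split; [lra | eauto]).
  assert (Sc : exists l, chain a c l /\ henstock_fine d l).
  { destruct (Req_dec x c) as [<-|Hne]; [eauto|].
    exists (l ++ (x, c, c) :: nil). apply Hextend; auto; lra. }
  destruct (Rle_lt_or_eq_dec c b Hcb) as [Hlt|<-]; [|exact Sc].
  exfalso. destruct Sc as [l2 [Hl2 Hf2]].
  set (c' := Rmin b (c + d c / 2)).
  assert (Hc' : c < c' <= c + d c / 2 /\ c' <= b).
  { unfold c'; split; [split|]; [apply Rmin_glb_lt; lra | apply Rmin_r | apply Rmin_l]. }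
  assert (Sc' : S c').
  { split; [lra|]. exists (l2 ++ (c, c', c) :: nil). apply Hextend; auto; lra. }
  apply Hub in Sc'. lra.
Qed.

Lemma cousin_mcshane (d : R -> R) a b : (forall x, 0 < d x) -> a <= b ->
  exists l, chain a b l /\ mcshane_fine a b d l.
Proof.
  intros Hd Hab. destruct (cousin d a b Hd Hab) as [l [Hc Hf]].
  exists l; split; auto. apply henstock_fine_mcshane; auto.
Qed.

(** * Gauge integrals on compact intervals *)

Definition is_primitive (f P : R -> R) : Prop :=
  forall u v, u <= v -> McS_int f u v (P v - P u).

Lemma McS_int_HS_int g a b J : McS_int g a b J -> HS_int g (fun x => x) a b J.
Proof.
  intros HJ e He. destruct (HJ e He) as [d [Hd P]].
  exists d; split; auto. intros l Hc Hf. apply P; auto. apply henstock_fine_mcshane; auto.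
Qed.

Lemma HS_int_unique H G a b J1 J2 : a <= b -> HS_int H G a b J1 -> HS_int H G a b J2 -> J1 = J2.
Proof.
  intros Hab H1 H2. apply eq_of_dist_lt; intros e He.
  destruct (H1 (e / 2)) as [d1 [Hd1 P1]]; [lra|].
  destruct (H2 (e / 2)) as [d2 [Hd2 P2]]; [lra|].
  destruct (cousin _ a b (Rmin_gauge_pos d1 d2 Hd1 Hd2) Hab) as [l [Hc Hf]].
  specialize (P1 l Hc (henstock_fine_mono _ _ _ (fun x => Rmin_l _ _) Hf)).
  specialize (P2 l Hc (henstock_fine_mono _ _ _ (fun x => Rmin_r _ _) Hf)).
  apply Rabs_def2 in P1. apply Rabs_def2 in P2. apply Rabs_def1; lra.
Qed.

Lemma McS_int_unique g a b J1 J2 : a <= b -> McS_int g a b J1 -> McS_int g a b J2 -> J1 = J2.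
Proof.
  intros Hab H1 H2.
  exact (HS_int_unique _ _ a b _ _ Hab (McS_int_HS_int _ _ _ _ H1) (McS_int_HS_int _ _ _ _ H2)).
Qed.

Lemma st_sum_id g l :
  st_sum g (fun x => x) l = lsum (fun p => let '(u, v, t) := p in g t * (v - u)) l.
Proof. rewrite st_sum_lsum. apply lsum_ext. intros [[u v] t] _; reflexivity. Qed.

Lemma McS_int_nonneg g a b J : a <= b -> (forall x, a <= x <= b -> 0 <= g x) ->
  McS_int g a b J -> 0 <= J.
Proof.
  intros Hab Hg HJ. apply le_of_le_add_eps; intros e He.
  destruct (HJ e He) as [d [Hd P]].
  destruct (cousin_mcshane d a b Hd Hab) as [l [Hc Hf]].
  specialize (P l Hc Hf). rewrite st_sum_id in P.
  assert (0 <= lsum (fun p => let '(u, v, t) := p in g t * (v - u)) l).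
  { apply lsum_nonneg. intros [[u v] t] Hi.
    destruct (Hf u v t Hi) as [Ht _]. destruct (chain_in a b l u v t Hc Hi).
    apply Rmult_le_pos; [apply Hg|]; lra. }
  apply Rabs_def2 in P. lra.
Qed.

Lemma McS_int_plus f h a b J1 J2 : McS_int f a b J1 -> McS_int h a b J2 ->
  McS_int (fun x => f x + h x) a b (J1 + J2).
Proof.
  intros H1 H2 e He.
  destruct (H1 (e / 2)) as [d1 [Hd1 P1]]; [lra|].
  destruct (H2 (e / 2)) as [d2 [Hd2 P2]]; [lra|].
  exists (fun x => Rmin (d1 x) (d2 x)); split; [apply Rmin_gauge_pos; auto|]. intros l Hc Hf.
  specialize (P1 l Hc (mcshane_fine_mono _ _ _ _ _ (fun x => Rmin_l _ _) Hf)).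
  specialize (P2 l Hc (mcshane_fine_mono _ _ _ _ _ (fun x => Rmin_r _ _) Hf)).
  rewrite !st_sum_lsum in *.
  rewrite (lsum_ext _ (fun p => stieltjes_term f (fun x => x) p + stieltjes_term h (fun x => x) p))
    by (intros [[u v] t] _; simpl; ring).
  rewrite lsum_plus. apply Rabs_def2 in P1. apply Rabs_def2 in P2. apply Rabs_def1; lra.
Qed.

Lemma McS_int_scal c f a b J : McS_int f a b J -> McS_int (fun x => c * f x) a b (c * J).
Proof.
  intros HJ e He. pose proof (Rabs_pos c).
  destruct (HJ (e / (Rabs c + 1))) as [d [Hd P]]; [apply div_succ_pos; lra|].
  exists d; split; auto. intros l Hc Hf. specialize (P l Hc Hf).
  rewrite !st_sum_lsum in *.
  rewrite (lsum_ext _ (fun p => c * stieltjes_term f (fun x => x) p))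
    by (intros [[u v] t] _; simpl; ring).
  rewrite lsum_scal, <- Rmult_minus_distr_l, Rabs_mult.
  eapply Rle_lt_trans; [apply Rmult_le_compat_l; [lra | left; exact P]|].
  apply mul_div_succ_lt; lra.
Qed.

Lemma McS_int_ext f h a b J : (forall x, a <= x <= b -> f x = h x) ->
  McS_int f a b J -> McS_int h a b J.
Proof.
  intros E HJ e He. destruct (HJ e He) as [d [Hd P]]. exists d; split; auto.
  intros l Hc Hf. specialize (P l Hc Hf). rewrite !st_sum_lsum in *. erewrite lsum_ext; [exact P|].
  intros [[u v] t] Hi. destruct (Hf u v t Hi) as [Ht _]. simpl. rewrite E; auto.
Qed.

Lemma McS_int_le f h a b J1 J2 : a <= b -> (forall x, a <= x <= b -> f x <= h x) ->
  McS_int f a b J1 -> McS_int h a b J2 -> J1 <= J2.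
Proof.
  intros Hab Hle H1 H2.
  assert (0 <= J2 + -1 * J1); [|lra].
  apply (McS_int_nonneg (fun x => h x + -1 * f x) a b); auto.
  - intros x Hx. specialize (Hle x Hx). lra.
  - apply McS_int_plus; auto. apply McS_int_scal; auto.
Qed.

Lemma McS_int_chasles f a b c J1 J2 J : a <= b -> b <= c ->
  McS_int f a b J1 -> McS_int f b c J2 -> McS_int f a c J -> J = J1 + J2.
Proof.
  intros Hab Hbc H1 H2 H. apply eq_of_dist_lt; intros e He.
  destruct (H1 (e / 3)) as [d1 [Hd1 P1]]; [lra|].
  destruct (H2 (e / 3)) as [d2 [Hd2 P2]]; [lra|].
  destruct (H (e / 3)) as [d [Hd P]]; [lra|].
  set (m := fun x => Rmin (Rmin (d1 x) (d2 x)) (d x)).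
  assert (Hm : forall x, 0 < m x) by (intros x; unfold m; repeat apply Rmin_glb_lt; auto).
  assert (Hm1 : forall x, m x <= d1 x) by (intros x; unfold m; eapply Rle_trans; apply Rmin_l).
  assert (Hm2 : forall x, m x <= d2 x)
    by (intros x; unfold m; eapply Rle_trans; [apply Rmin_l | apply Rmin_r]).
  destruct (cousin_mcshane m a b Hm Hab) as [l1 [Hc1 Hf1]].
  destruct (cousin_mcshane m b c Hm Hbc) as [l2 [Hc2 Hf2]].
  specialize (P1 _ Hc1 (mcshane_fine_mono _ _ _ _ _ Hm1 Hf1)).
  specialize (P2 _ Hc2 (mcshane_fine_mono _ _ _ _ _ Hm2 Hf2)).
  assert (Hf : mcshane_fine a c d (l1 ++ l2)).
  { apply (mcshane_fine_mono _ _ m); [intros x; apply Rmin_r|].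
    apply mcshane_fine_app;
      [apply (mcshane_fine_widen a b) | apply (mcshane_fine_widen b c)]; auto; lra. }
  specialize (P _ (chain_app _ _ _ _ _ Hc1 Hc2) Hf).
  rewrite st_sum_lsum, lsum_app in P. rewrite st_sum_lsum in P1, P2.
  apply Rabs_def2 in P1. apply Rabs_def2 in P2. apply Rabs_def2 in P. apply Rabs_def1; lra.
Qed.

Fixpoint gauge_min_upto (ds : nat -> R -> R) (n : nat) (x : R) : R :=
  match n with O => ds O x | S k => Rmin (gauge_min_upto ds k x) (ds (S k) x) end.

Lemma gauge_min_upto_pos ds n : (forall k x, 0 < ds k x) -> forall x, 0 < gauge_min_upto ds n x.
Proof. intros H x; induction n; simpl; auto. apply Rmin_glb_lt; auto. Qed.

Lemma gauge_min_upto_le ds n k : (k <= n)%nat -> forall x, gauge_min_upto ds n x <= ds k x.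
Proof.
  intros Hk x. induction n.
  - inversion Hk; simpl; lra.
  - inversion Hk; subst; simpl; [apply Rmin_r|]. eapply Rle_trans; [apply Rmin_l | auto].
Qed.

(* The sums over divisions fine for the gauges [d_0], ..., [d_n] (where [d_n]
   certifies the Cauchy condition at [1/(n+1)]) form a Cauchy sequence. *)
Lemma McS_int_cauchy f a b : a <= b ->
  (forall e, 0 < e -> exists d, (forall x, 0 < d x) /\ forall l1 l2,
     chain a b l1 -> mcshane_fine a b d l1 -> chain a b l2 -> mcshane_fine a b d l2 ->
     Rabs (st_sum f (fun x => x) l1 - st_sum f (fun x => x) l2) < e) ->
  exists J, McS_int f a b J.
Proof.
  intros Hab HC.
  set (sum := st_sum f (fun x => x)).
  destruct (functional_choice (fun (n : nat) d => (forall x, 0 < d x) /\ forall l1 l2,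
     chain a b l1 -> mcshane_fine a b d l1 -> chain a b l2 -> mcshane_fine a b d l2 ->
     Rabs (sum l1 - sum l2) < / INR (S n))) as [ds Hds].
  { intros n. apply HC. apply Rinv_0_lt_compat, lt_0_INR; lia. }
  assert (Hpos : forall k x, 0 < ds k x) by (intros k; apply Hds).
  destruct (functional_choice
              (fun (n : nat) l => chain a b l /\ mcshane_fine a b (gauge_min_upto ds n) l))
    as [ls Hls].
  { intros n. apply cousin_mcshane; auto. apply gauge_min_upto_pos; auto. }
  assert (Hclose : forall k n, (k <= n)%nat -> forall l, chain a b l -> mcshane_fine a b (ds k) l ->
     Rabs (sum (ls n) - sum l) < / INR (S k)).
  { intros k n Hkn l Hc Hf. apply (proj2 (Hds k)); auto; [apply Hls|].
    eapply mcshane_fine_mono; [apply gauge_min_upto_le, Hkn | apply Hls]. }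
  assert (Hinv : forall N, (0 < N)%nat -> / INR (S N) <= / INR N).
  { intros N HN. apply Rinv_le_contravar; [apply lt_0_INR; lia|]. rewrite S_INR; lra. }
  assert (Hcauchy : Cauchy_crit (fun n => sum (ls n))).
  { intros e He. destruct (archimed_cor1 e He) as [N [HN1 HN2]].
    exists N. intros n m Hn Hm. unfold Rdist.
    eapply Rlt_le_trans; [apply (Hclose N n Hn); [apply Hls|] |].
    - eapply mcshane_fine_mono; [apply gauge_min_upto_le, Hm | apply Hls].
    - specialize (Hinv N HN2). lra. }
  destruct (R_complete _ Hcauchy) as [L HL].
  exists L. intros e He.
  destruct (archimed_cor1 (e / 2)) as [N [HN1 HN2]]; [lra|].
  destruct (HL (e / 2)) as [N2 HN]; [lra|].
  exists (ds N). split; auto. intros l Hc Hf.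
  specialize (HN (max N N2) (Nat.le_max_r _ _)). unfold Rdist in HN.
  specialize (Hclose N (max N N2) (Nat.le_max_l _ _) l Hc Hf). specialize (Hinv N HN2).
  fold sum. apply Rabs_def2 in HN. apply Rabs_def2 in Hclose. apply Rabs_def1; lra.
Qed.

(* Interval integrals are additive, so a primitive is obtained by integrating from 0. *)
Lemma McS_int_primitive f : (forall a b, a <= b -> exists J, McS_int f a b J) ->
  exists P, is_primitive f P.
Proof.
  intros H.
  destruct (functional_choice
              (fun (ab : R * R) J => fst ab <= snd ab -> McS_int f (fst ab) (snd ab) J))
    as [I HI].
  { intros [a b]. destruct (Rle_dec a b) as [h|h].
    - destruct (H a b h) as [J HJ]. exists J; auto.
    - exists 0; simpl; intros; contradiction. }
  assert (Hadd : forall a b c, a <= b -> b <= c -> I (a, c) = I (a, b) + I (b, c)).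
  { intros a b c H1 H2. apply (McS_int_chasles f a b c); [exact H1 | exact H2 | ..];
      apply (HI (_, _)); simpl; lra. }
  exists (fun x => if Rle_dec 0 x then I (0, x) else - I (x, 0)).
  intros u v Huv.
  replace ((if Rle_dec 0 v then I (0, v) else - I (v, 0))
           - (if Rle_dec 0 u then I (0, u) else - I (u, 0)))
    with (I (u, v)); [apply (HI (u, v)); exact Huv|].
  destruct (Rle_dec 0 v); destruct (Rle_dec 0 u).
  - rewrite (Hadd 0 u v) by lra. ring.
  - rewrite (Hadd u 0 v) by lra. ring.
  - lra.
  - rewrite (Hadd u v 0) by lra. ring.
Qed.

(** * Common refinements *)

(* A doubly tagged division [(u, v, s, t)] carries a tag from each of two divisions. *)
Definition proj_tag1 (q : R * R * R * R) : R * R * R := let '(u, v, s, _) := q in (u, v, s).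
Definition proj_tag2 (q : R * R * R * R) : R * R * R := let '(u, v, _, t) := q in (u, v, t).

Definition refines (E D : list (R * R * R)) : Prop :=
  (forall H P, st_sum H P E = st_sum H P D) /\
  forall u v t, In (u, v, t) E -> exists u' v', In (u', v', t) D /\ u' <= u /\ v <= v'.

Lemma refines_mcshane_fine a b d E D : refines E D -> mcshane_fine a b d D -> mcshane_fine a b d E.
Proof.
  intros [_ HE] Hf u v t Hi. destruct (HE u v t Hi) as [u' [v' [Hi' [Hu Hv]]]].
  destruct (Hf _ _ _ Hi') as [H1 [H2 H3]]. repeat split; lra.
Qed.

Lemma refines_cons u v t E D : refines E D -> refines ((u, v, t) :: E) ((u, v, t) :: D).
Proof.
  intros [HS HE]. split; [intros H P; simpl; rewrite HS; reflexivity|].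
  intros u' v' t' [Hi|Hi].
  - exists u', v'. repeat split; [left|..]; auto; lra.
  - destruct (HE u' v' t' Hi) as [x [y [Hi' Hxy]]]. exists x, y. split; [right|]; auto.
Qed.

Lemma refines_cons_split a w v t E D : a <= w <= v ->
  refines E ((w, v, t) :: D) -> refines ((a, w, t) :: E) ((a, v, t) :: D).
Proof.
  intros Hw [HS HE]. split.
  - intros H P. simpl. rewrite HS. simpl. ring.
  - intros u' v' t' [Hi|Hi].
    + injection Hi as <- <- <-. exists a, v. repeat split; [left|..]; auto; lra.
    + destruct (HE u' v' t' Hi) as [x [y [[Hxy|Hxy] Hle]]].
      * injection Hxy as <- <- <-. exists a, v. repeat split; [left|..]; auto; lra.
      * exists x, y. split; [right|]; auto.
Qed.

Lemma chain_proj_tag2 a b Q : chain a b (map proj_tag1 Q) -> chain a b (map proj_tag2 Q).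
Proof.
  revert a; induction Q as [|[[[u v] s] t] Q IH]; simpl; intros a H; auto.
  destruct H as [H1 [H2 H3]]; auto.
Qed.

Lemma common_refinement a b D1 D2 : chain a b D1 -> chain a b D2 ->
  exists Q, chain a b (map proj_tag1 Q) /\
    refines (map proj_tag1 Q) D1 /\ refines (map proj_tag2 Q) D2.
Proof.
  remember (length D1 + length D2)%nat as n eqn:Hn.
  assert (Hlen : (length D1 + length D2 <= n)%nat) by lia. clear Hn.
  revert D1 D2 a Hlen. induction n as [|n IH]; intros D1 D2 a Hlen H1 H2.
  - destruct D1; [|simpl in Hlen; lia]. destruct D2; [|simpl in Hlen; lia].
    exists nil. split; [exact H1|]. split; split; auto; intros ? ? ? [].
  - destruct D1 as [|[[u1 v1] s] D1'].
    { simpl in H1; subst. apply chain_degenerate in H2; subst.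
      exists nil. split; [reflexivity|]. split; split; auto; intros ? ? ? []. }
    destruct D2 as [|[[u2 v2] t] D2'].
    { simpl in H2; subst. apply chain_degenerate in H1; discriminate. }
    simpl in H1, H2, Hlen. destruct H1 as [-> [Hav1 Hc1]]. destruct H2 as [-> [Hav2 Hc2]].
    destruct (total_order_T v1 v2) as [[Hlt|<-]|Hgt].
    + destruct (IH D1' ((v1, v2, t) :: D2') v1) as [Q [HQ [R1 R2]]]; simpl; auto; [lia|].
      exists ((a, v1, s, t) :: Q). split; [simpl; auto|]. simpl. split.
      * apply refines_cons; auto.
      * apply refines_cons_split; auto; lra.
    + destruct (IH D1' D2' v1) as [Q [HQ [R1 R2]]]; auto; [lia|].
      exists ((a, v1, s, t) :: Q). split; [simpl; auto|]. simpl. split; apply refines_cons; auto.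
    + destruct (IH ((v2, v1, s) :: D1') D2' v2) as [Q [HQ [R1 R2]]]; simpl; auto; [lia|].
      exists ((a, v2, s, t) :: Q). split; [simpl; auto|]. simpl. split.
      * apply refines_cons_split; auto; lra.
      * apply refines_cons; auto.
Qed.

(* Two fine divisions are compared on their common refinement. *)
Lemma McS_integrable_of_oscillation h a b : a <= b ->
  (forall e, 0 < e -> exists d, (forall x, 0 < d x) /\ forall Q,
     chain a b (map proj_tag1 Q) -> mcshane_fine a b d (map proj_tag1 Q) ->
     mcshane_fine a b d (map proj_tag2 Q) ->
     lsum (fun q => let '(u, v, s, t) := q in Rabs (h s * (v - u) - h t * (v - u))) Q < e) ->
  exists J, McS_int h a b J.
Proof.
  intros Hab Hosc. apply McS_int_cauchy; auto. intros e He.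
  destruct (Hosc e He) as [d [Hd Hsmall]]. exists d; split; auto.
  intros D1 D2 Hc1 Hf1 Hc2 Hf2.
  destruct (common_refinement a b D1 D2 Hc1 Hc2) as [Q [HQ [R1 R2]]].
  rewrite <- (proj1 R1), <- (proj1 R2), !st_sum_id, !lsum_map, <- lsum_minus.
  eapply Rle_lt_trans; [apply lsum_abs|].
  erewrite lsum_ext; [apply Hsmall; auto; eapply refines_mcshane_fine; eauto|].
  intros [[[u v] s] t] _; reflexivity.
Qed.

(** * The Saks-Henstock lemma *)

Definition deviation (g G : R -> R) (p : R * R * R) : R :=
  let '(u, v, t) := p in g t * (v - u) - (G v - G u).

Lemma abs_eq_pos_part_add_neg_part x : Rabs x = Rmax (1 * x) 0 + Rmax (-1 * x) 0.
Proof.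
  rewrite Rmult_1_l. unfold Rmax.
  destruct (Rle_dec x 0); destruct (Rle_dec (-1 * x) 0);
    [ assert (x = 0) by lra; subst; rewrite Rabs_R0; lra
    | rewrite Rabs_left1 by lra; lra | rewrite Rabs_right by lra; lra | lra ].
Qed.

Section SaksHenstock.
Variables (g G : R -> R) (a b : R).
Hypothesis hG : is_primitive g G.

(* For a sign [sg], every piece on which [sg * deviation] is positive is replaced
   by a fine subdivision whose Riemann sum is almost exactly the increment of [G]. *)
Lemma remove_signed_deviations sg : sg * sg = 1 -> forall d, (forall x, 0 < d x) ->
  forall l p q eta, chain p q l -> a <= p -> q <= b -> mcshane_fine a b d l -> 0 < eta ->
  exists l', chain p q l' /\ mcshane_fine a b d l' /\
    Rabs (st_sum g (fun x => x) l' -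
          (st_sum g (fun x => x) l - sg * lsum (fun p => Rmax (sg * deviation g G p) 0) l)) < eta.
Proof.
  intros Hsg d Hd l. induction l as [|[[u v] t] l IH]; intros p q eta Hc Hp Hq Hf He.
  - exists nil. split; [exact Hc|]. split; [intros ? ? ? []|]. simpl.
    replace (0 - (0 - sg * 0)) with 0 by ring. rewrite Rabs_R0; auto.
  - simpl in Hc. destruct Hc as [-> [Hpv Hc]]. pose proof (chain_le _ _ _ Hc) as Hvq.
    destruct (IH v q (eta / 2) Hc ltac:(lra) Hq (fun u' v' t' Hi => Hf u' v' t' (or_intror Hi))
                 ltac:(lra))
      as [l1 [Hc1 [Hf1 Hl1]]].
    rewrite !st_sum_id in *. simpl.
    set (S1 := lsum (fun p => let '(u, v, t) := p in g t * (v - u)) l1) in *.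
    set (S := lsum (fun p => let '(u, v, t) := p in g t * (v - u)) l) in *.
    set (X := lsum (fun p => Rmax (sg * deviation g G p) 0) l) in *.
    destruct (Rle_dec (sg * (g t * (v - p) - (G v - G p))) 0) as [Hn|Hn].
    + exists ((p, v, t) :: l1). split; [simpl; auto|]. split.
      * intros u' v' t' [Hi|Hi]; [apply Hf; left; auto | apply Hf1; auto].
      * rewrite st_sum_id. simpl. fold S1. rewrite Rmax_right by lra.
        replace (g t * (v - p) + S1 - (g t * (v - p) + S - sg * (0 + X))) with (S1 - (S - sg * X))
          by ring. lra.
    + destruct (hG p v ltac:(lra) (eta / 2) ltac:(lra)) as [d1 [Hd1 P1]].
      destruct (cousin_mcshane _ p v (Rmin_gauge_pos d d1 Hd Hd1) ltac:(lra)) as [m [Hcm Hfm]].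
      specialize (P1 m Hcm (mcshane_fine_mono _ _ _ _ _ (fun x => Rmin_r _ _) Hfm)).
      exists (m ++ l1). split; [eapply chain_app; eauto|]. split.
      * apply mcshane_fine_app; auto. apply (mcshane_fine_widen p v); [lra | lra|].
        exact (mcshane_fine_mono _ _ _ _ _ (fun x => Rmin_l _ _) Hfm).
      * rewrite st_sum_id, lsum_app in *. fold S1. rewrite Rmax_left by lra.
        set (Sm := lsum (fun p => let '(u, v, t) := p in g t * (v - u)) m) in *.
        replace (Sm + S1 - (g t * (v - p) + S - sg * (sg * (g t * (v - p) - (G v - G p)) + X)))
          with ((Sm - (G v - G p)) + (S1 - (S - sg * X))
                + (sg * sg - 1) * (g t * (v - p) - (G v - G p)))
          by ring.
        rewrite Hsg, Rminus_diag, Rmult_0_l, Rplus_0_r.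
        eapply Rle_lt_trans; [apply Rabs_triang | lra].
Qed.

Lemma saks_henstock : a <= b -> forall e, 0 < e -> exists d, (forall x, 0 < d x) /\
  forall l, chain a b l -> mcshane_fine a b d l -> lsum (fun p => Rabs (deviation g G p)) l <= e.
Proof.
  intros Hab e He. destruct (hG a b Hab (e / 4) ltac:(lra)) as [d [Hd P]].
  exists d; split; auto. intros l Hc Hf.
  assert (Hsigned : forall sg, sg * sg = 1 ->
            Rabs (sg * lsum (fun p => Rmax (sg * deviation g G p) 0) l) <= e / 2).
  { intros sg Hsg. apply le_of_le_add_eps; intros eta Heta.
    destruct (remove_signed_deviations sg Hsg d Hd l a b eta Hc ltac:(lra) ltac:(lra) Hf Heta)
      as [l' [Hc' [Hf' Hl']]].
    pose proof (P l Hc Hf) as P0. pose proof (P l' Hc' Hf') as P1.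
    apply Rabs_def2 in Hl'. apply Rabs_def2 in P0. apply Rabs_def2 in P1.
    apply Rlt_le, Rabs_def1; lra. }
  assert (Hpos : forall sg, 0 <= lsum (fun p => Rmax (sg * deviation g G p) 0) l)
    by (intros sg; apply lsum_nonneg; intros; apply Rmax_r).
  pose proof (Hsigned 1 ltac:(ring)) as K1. pose proof (Hsigned (-1) ltac:(ring)) as K2.
  rewrite Rabs_mult, Rabs_R1, Rmult_1_l, Rabs_right in K1 by (apply Rle_ge, Hpos).
  assert (Habs1 : Rabs (-1) = 1) by (rewrite Rabs_left; lra).
  rewrite Rabs_mult, Habs1, Rmult_1_l, Rabs_right in K2 by (apply Rle_ge, Hpos).
  rewrite (lsum_ext _ (fun p => Rmax (1 * deviation g G p) 0 + Rmax (-1 * deviation g G p) 0))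
    by (intros; apply abs_eq_pos_part_add_neg_part).
  rewrite lsum_plus. lra.
Qed.

End SaksHenstock.

Lemma saks_henstock_both_tags g G a b : is_primitive g G -> a <= b ->
  forall e, 0 < e -> exists d, (forall x, 0 < d x) /\ forall Q,
    chain a b (map proj_tag1 Q) -> mcshane_fine a b d (map proj_tag1 Q) ->
    mcshane_fine a b d (map proj_tag2 Q) ->
    lsum (fun q => Rabs (deviation g G (proj_tag1 q)) + Rabs (deviation g G (proj_tag2 q))) Q <= e.
Proof.
  intros hG Hab e He.
  destruct (saks_henstock g G a b hG Hab (e / 2) ltac:(lra)) as [d [Hd Hsh]].
  exists d; split; auto. intros Q Hc1 Hf1 Hf2.
  pose proof (Hsh _ Hc1 Hf1) as S1. pose proof (Hsh _ (chain_proj_tag2 _ _ _ Hc1) Hf2) as S2.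
  rewrite lsum_map in S1, S2. rewrite lsum_plus. lra.
Qed.

(** * Limits at infinity *)

Lemma lim_pinf_of_cauchy P :
  (forall e, 0 < e -> exists A, forall u v, A <= u -> A <= v -> Rabs (P u - P v) < e) ->
  exists l, lim_pinf P l.
Proof.
  intros HC.
  assert (Hc : Cauchy_crit (fun n => P (INR n))).
  { intros e He. destruct (HC e He) as [A HA]. destruct (INR_unbounded A) as [N HN].
    exists N. intros n m Hn Hm. unfold Rdist.
    apply le_INR in Hn. apply le_INR in Hm. apply HA; lra. }
  destruct (R_complete _ Hc) as [l Hl]. exists l. intros e He.
  destruct (HC (e / 2) ltac:(lra)) as [A HA]. destruct (Hl (e / 2) ltac:(lra)) as [N HN].
  destruct (INR_unbounded A) as [N2 HN2].
  exists A. intros x Hx. set (n := max N N2).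
  specialize (HN n (Nat.le_max_l _ _)). unfold Rdist in HN.
  assert (INR N2 <= INR n) by (apply le_INR, Nat.le_max_r).
  specialize (HA x (INR n) ltac:(lra) ltac:(lra)).
  replace (P x - l) with ((P x - P (INR n)) + (P (INR n) - l)) by ring.
  eapply Rle_lt_trans; [apply Rabs_triang | lra].
Qed.

Lemma lim_minf_of_cauchy P :
  (forall e, 0 < e -> exists A, forall u v, u <= A -> v <= A -> Rabs (P u - P v) < e) ->
  exists l, lim_minf P l.
Proof.
  intros HC. destruct (lim_pinf_of_cauchy (fun x => P (- x))) as [l Hl].
  { intros e He. destruct (HC e He) as [A HA]. exists (- A). intros u v Hu Hv. apply HA; lra. }
  exists l. intros e He. destruct (Hl e He) as [M HM]. exists (- M). intros x Hx.
  replace x with (- - x) by ring. apply HM. lra.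
Qed.

Lemma lim_pinf_dist_le f l b c K : lim_pinf f l ->
  (forall y, b <= y -> Rabs (f y - c) <= K) -> Rabs (l - c) <= K.
Proof.
  intros Hl Hb. apply le_of_le_add_eps; intros e He. destruct (Hl e He) as [M HM].
  set (y := Rmax b (M + 1)).
  specialize (HM y ltac:(unfold y; pose proof (Rmax_r b (M + 1)); lra)).
  specialize (Hb y (Rmax_l _ _)).
  replace (l - c) with (- (f y - l) + (f y - c)) by ring.
  eapply Rle_trans; [apply Rabs_triang|]. rewrite Rabs_Ropp. lra.
Qed.

Lemma lim_minf_dist_le f l b c K : lim_minf f l ->
  (forall y, y <= b -> Rabs (f y - c) <= K) -> Rabs (l - c) <= K.
Proof.
  intros Hl Hb. apply (lim_pinf_dist_le (fun y => f (- y)) l (- b) c K).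
  - intros e He. destruct (Hl e He) as [M HM]. exists (- M). intros x Hx. apply HM; lra.
  - intros y Hy. apply Hb; lra.
Qed.

(* The supremum of [N] is approached from below. *)
Lemma nondecreasing_tail_small (N : R -> R) (B : R) :
  (forall u v, u <= v -> N u <= N v) -> (forall u v, u <= v -> N v - N u <= B) ->
  forall e, 0 < e -> exists A, forall u v, A <= u -> u <= v -> N v - N u < e.
Proof.
  intros Hmono HB e He.
  set (E := fun y => exists x, y = N x).
  assert (Hbound : bound E).
  { exists (N 0 + B). intros y [x ->]. destruct (Rle_dec 0 x) as [Hx|Hx].
    - specialize (HB 0 x Hx); lra.
    - pose proof (Hmono x 0 ltac:(lra)). pose proof (HB 0 0 (Rle_refl 0)). lra. }
  destruct (completeness E Hbound (ex_intro _ (N 0) (ex_intro _ 0 eq_refl))) as [L [HL1 HL2]].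
  assert (Hx : exists x0, L - e < N x0).
  { apply NNPP; intros Hn. assert (L <= L - e); [|lra].
    apply HL2. intros y [x ->]. apply Rnot_lt_le. intros Hlt. apply Hn. exists x; lra. }
  destruct Hx as [x0 Hx0]. exists x0. intros u v Hu Huv.
  pose proof (HL1 (N v) (ex_intro _ v eq_refl)). pose proof (Hmono _ _ Hu). lra.
Qed.

Lemma nondecreasing_tail_small_minf (N : R -> R) (B : R) :
  (forall u v, u <= v -> N u <= N v) -> (forall u v, u <= v -> N v - N u <= B) ->
  forall e, 0 < e -> exists A, forall u v, u <= v -> v <= A -> N v - N u < e.
Proof.
  intros Hmono HB e He.
  destruct (nondecreasing_tail_small (fun x => - N (- x)) B) with (e := e) as [A HA]; auto.
  - intros u v Huv. pose proof (Hmono (- v) (- u) ltac:(lra)). lra.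
  - intros u v Huv. pose proof (HB (- v) (- u) ltac:(lra)). lra.
  - exists (- A). intros u v Huv Hv. specialize (HA (- v) (- u) ltac:(lra) ltac:(lra)).
    rewrite !Ropp_involutive in HA. lra.
Qed.

(** * Continuous functions with limits at both ends *)

Section ContinuousWithLimits.
Variables (F : R -> R) (l1 l2 : R).
Hypothesis hc : continuity F.
Hypothesis hp : lim_pinf F l1.
Hypothesis hm : lim_minf F l2.

Lemma bounded_of_limits : exists M, forall s, Rabs (F s) <= M.
Proof.
  destruct (hp 1 ltac:(lra)) as [R0 H0]. destruct (hm 1 ltac:(lra)) as [R1 H1].
  set (lo := Rmin R1 R0). set (hi := Rmax R1 R0).
  assert (Hlh : lo <= hi) by (unfold lo, hi; eapply Rle_trans; [apply Rmin_l | apply Rmax_l]).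
  destruct (continuity_ab_maj F lo hi Hlh (fun c _ => hc c)) as [x1 [Hx1 _]].
  destruct (continuity_ab_min F lo hi Hlh (fun c _ => hc c)) as [x2 [Hx2 _]].
  exists (Rabs (F x1) + Rabs (F x2) + Rabs l1 + Rabs l2 + 1). intros s.
  pose proof (Rabs_pos (F x1)). pose proof (Rabs_pos (F x2)).
  pose proof (Rabs_pos l1). pose proof (Rabs_pos l2).
  destruct (Rlt_dec hi s) as [Hs|Hs].
  - specialize (H0 s ltac:(unfold hi in Hs; pose proof (Rmax_r R1 R0); lra)).
    replace (F s) with ((F s - l1) + l1) by ring. eapply Rle_trans; [apply Rabs_triang | lra].
  - destruct (Rlt_dec s lo) as [Hs'|Hs'].
    + specialize (H1 s ltac:(unfold lo in Hs'; pose proof (Rmin_l R1 R0); lra)).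
      replace (F s) with ((F s - l2) + l2) by ring. eapply Rle_trans; [apply Rabs_triang | lra].
    + assert (Hi : lo <= s <= hi) by lra. specialize (Hx1 s Hi). specialize (Hx2 s Hi).
      pose proof (Rle_abs (F x1)). pose proof (Rle_abs (- F x2)). rewrite Rabs_Ropp in *.
      apply Rabs_le. lra.
Qed.

(* Heine's theorem on a compact interval, outside of which [F] is within [e/2]
   of its limits. *)
Lemma uniformly_continuous_of_limits : forall e, 0 < e ->
  exists r, 0 < r /\ forall s s', Rabs (s - s') < r -> Rabs (F s - F s') < e.
Proof.
  intros e He.
  destruct (hp (e / 2) ltac:(lra)) as [R0 H0]. destruct (hm (e / 2) ltac:(lra)) as [R1 H1].
  set (lo := Rmin R1 R0 - 1). set (hi := Rmax R1 R0 + 1).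
  assert (Hlo : lo + 1 <= R1) by (unfold lo; pose proof (Rmin_l R1 R0); lra).
  assert (Hhi : R0 <= hi - 1) by (unfold hi; pose proof (Rmax_r R1 R0); lra).
  destruct (Heine F (fun c => lo <= c <= hi) (compact_P3 lo hi) (fun c _ => hc c)
              (mkposreal e He)) as [[dl Hdl] Hd].
  simpl in Hd.
  exists (Rmin dl 1). split; [apply Rmin_glb_lt; lra|]. intros s s' Hss.
  assert (A1 : Rabs (s - s') < dl) by (eapply Rlt_le_trans; [apply Hss | apply Rmin_l]).
  assert (A2 : Rabs (s - s') < 1) by (eapply Rlt_le_trans; [apply Hss | apply Rmin_r]).
  apply Rabs_def2 in A2.
  assert (Hnear : forall l, Rabs (F s - l) < e / 2 -> Rabs (F s' - l) < e / 2 ->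
            Rabs (F s - F s') < e).
  { intros l X1 X2. replace (F s - F s') with ((F s - l) - (F s' - l)) by ring.
    eapply Rle_lt_trans; [apply Rabs_triang|]. rewrite Rabs_Ropp. lra. }
  destruct (Rle_dec lo s); destruct (Rle_dec s hi);
    destruct (Rle_dec lo s'); destruct (Rle_dec s' hi);
    try (apply Hd; auto; lra);
    try (apply (Hnear l2); apply H1; lra);
    try (apply (Hnear l1); apply H0; lra).
Qed.

End ContinuousWithLimits.

(** * Integrable functions and their primitives *)

Lemma weighted_term_diff_le (phi g G : R -> R) u v s t :
  Rabs (phi s * g s * (v - u) - phi t * g t * (v - u)) <=
  Rabs (phi s) * Rabs (deviation g G (u, v, s)) + Rabs (phi t) * Rabs (deviation g G (u, v, t))
  + Rabs (phi s - phi t) * Rabs (G v - G u).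
Proof.
  simpl. rewrite <- !Rabs_mult.
  replace (phi s * g s * (v - u) - phi t * g t * (v - u))
    with (phi s * (g s * (v - u) - (G v - G u)) - phi t * (g t * (v - u) - (G v - G u))
          + (phi s - phi t) * (G v - G u)) by ring.
  eapply Rle_trans; [apply Rabs_triang|]. apply Rplus_le_compat_r.
  eapply Rle_trans; [apply Rabs_triang|]. rewrite Rabs_Ropp. lra.
Qed.

Section IntegrableFunction.
Variables (g G : R -> R).
Hypothesis hg : L1 g.
Hypothesis hG : forall x, Leb_int_lower g x (G x).

Lemma G_primitive : is_primitive g G.
Proof.
  intros u v Huv. destruct (proj1 hg u v Huv) as [J HJ].
  replace (G v - G u) with J; auto. apply eq_of_dist_lt; intros e He.
  destruct (hG u (e / 2) ltac:(lra)) as [M1 HM1]. destruct (hG v (e / 2) ltac:(lra)) as [M2 HM2].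
  set (a0 := Rmin u (- Rabs M1 - Rabs M2 - 1)).
  assert (Ha1 : a0 <= u) by apply Rmin_l.
  assert (Ha2 : a0 <= - Rabs M1 - Rabs M2 - 1) by apply Rmin_r.
  pose proof (Rle_abs M1). pose proof (Rle_abs M2).
  pose proof (Rabs_pos M1). pose proof (Rabs_pos M2).
  destruct (proj1 hg a0 u Ha1) as [J1 HJ1]. destruct (proj1 hg a0 v ltac:(lra)) as [J2 HJ2].
  pose proof (McS_int_chasles g a0 u v J1 J J2 Ha1 Huv HJ1 HJ HJ2).
  specialize (HM1 a0 J1 ltac:(lra) Ha1 HJ1). specialize (HM2 a0 J2 ltac:(lra) ltac:(lra) HJ2).
  apply Rabs_def2 in HM1. apply Rabs_def2 in HM2. apply Rabs_def1; lra.
Qed.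

Lemma G_lim_minf : lim_minf G 0.
Proof.
  intros e He. destruct (hG 0 e He) as [M HM]. exists (Rmin (- M) 0). intros x Hx.
  pose proof (Rmin_l (- M) 0). pose proof (Rmin_r (- M) 0).
  specialize (HM x (G 0 - G x) ltac:(lra) ltac:(lra) (G_primitive x 0 ltac:(lra))).
  replace (G 0 - G x - G 0) with (- (G x - 0)) in HM by ring. rewrite Rabs_Ropp in HM. exact HM.
Qed.

Lemma abs_integrable a b : a <= b -> exists J, McS_int (fun y => Rabs (g y)) a b J.
Proof.
  intros Hab. apply McS_integrable_of_oscillation; auto. intros e He.
  destruct (saks_henstock_both_tags g G a b G_primitive Hab (e / 2) ltac:(lra)) as [d [Hd Hsh]].
  exists d; split; auto. intros Q Hc1 Hf1 Hf2. specialize (Hsh Q Hc1 Hf1 Hf2).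
  apply Rle_lt_trans with (e / 2); [|lra]. eapply Rle_trans; [|exact Hsh]. apply lsum_le.
  intros [[[u v] s] t] Hi. simpl.
  destruct (chain_in a b _ u v s Hc1 (in_map proj_tag1 _ _ Hi)) as [_ [Huv _]].
  replace (Rabs (g s) * (v - u) - Rabs (g t) * (v - u))
    with (Rabs (g s * (v - u)) - Rabs (g t * (v - u)))
    by (rewrite !Rabs_mult, (Rabs_right (v - u)) by lra; ring).
  eapply Rle_trans; [apply Rabs_triang_inv2|].
  replace (g s * (v - u) - g t * (v - u))
    with ((g s * (v - u) - (G v - G u)) - (g t * (v - u) - (G v - G u))) by ring.
  eapply Rle_trans; [apply Rabs_triang|]. rewrite Rabs_Ropp. lra.
Qed.

Lemma weighted_stieltjes (phi : R -> R) (M : R) a b c J : (forall y, Rabs (phi y) <= M) ->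
  a <= b -> McS_int (fun y => phi y * g y) a b J ->
  HS_int (fun y => c - phi y) G a b (c * (G b - G a) - J).
Proof.
  intros hM Hab HJ e He.
  assert (HM0 : 0 <= M) by (eapply Rle_trans; [apply Rabs_pos | apply (hM 0)]).
  destruct (saks_henstock g G a b G_primitive Hab (e / 2 / (M + 1))
              (div_succ_pos M (e / 2) HM0 ltac:(lra))) as [d [Hd Hsh]].
  destruct (HJ (e / 2) ltac:(lra)) as [d2 [Hd2 P2]].
  exists (fun x => Rmin (d x) (d2 x)). split; [apply Rmin_gauge_pos; auto|]. intros l Hc Hf.
  apply (henstock_fine_mcshane a b) in Hf; auto.
  specialize (Hsh l Hc (mcshane_fine_mono _ _ _ _ _ (fun x => Rmin_l _ _) Hf)).
  specialize (P2 l Hc (mcshane_fine_mono _ _ _ _ _ (fun x => Rmin_r _ _) Hf)).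
  assert (Hdev : Rabs (st_sum (fun y => phi y * g y) (fun x => x) l - st_sum phi G l) <= e / 2).
  { rewrite !st_sum_lsum, <- lsum_minus.
    rewrite (lsum_ext _ (fun p => phi (let '(_, _, t) := p in t) * deviation g G p))
      by (intros [[u v] t] _; simpl; ring).
    eapply Rle_trans; [apply lsum_abs|].
    eapply Rle_trans; [apply lsum_le with (h := fun p => M * Rabs (deviation g G p))|].
    - intros [[u v] t] _. rewrite Rabs_mult. apply Rmult_le_compat_r; [apply Rabs_pos | auto].
    - rewrite lsum_scal. pose proof (mul_div_succ_lt M (e / 2) HM0 ltac:(lra)).
      assert (M * lsum (fun p => Rabs (deviation g G p)) l <= M * (e / 2 / (M + 1)))
        by (apply Rmult_le_compat_l; auto).
      lra. }
  assert (Hsplit : st_sum (fun y => c - phi y) G l = c * (G b - G a) - st_sum phi G l).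
  { rewrite !st_sum_lsum, <- (lsum_increment_chain G a b l Hc), <- lsum_scal, <- lsum_minus.
    apply lsum_ext. intros [[u v] t] _; simpl; ring. }
  rewrite Hsplit. apply Rabs_def2 in P2. apply Rabs_le_between in Hdev. apply Rabs_def1; lra.
Qed.

Section WithAbsPrimitive.
Variable N : R -> R.
Hypothesis hN : is_primitive (fun y => Rabs (g y)) N.

Lemma N_nondecreasing u v : u <= v -> N u <= N v.
Proof.
  intros Huv. assert (0 <= N v - N u); [|lra].
  apply (McS_int_nonneg (fun y => Rabs (g y)) u v); auto. intros; apply Rabs_pos.
Qed.

Lemma N_increment_mul_small a b e : a <= b -> 0 < e ->
  exists eta, 0 < eta /\ eta * (N b - N a) < e.
Proof.
  intros Hab He. pose proof (N_nondecreasing a b Hab).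
  exists (e / (N b - N a + 1)). split; [apply div_succ_pos; lra|].
  rewrite Rmult_comm. apply mul_div_succ_lt; lra.
Qed.

Lemma N_increments_bounded : exists B, forall u v, u <= v -> N v - N u <= B.
Proof. destruct (proj2 hg) as [B HB]. exists B. intros u v Huv. apply (HB u v); auto. Qed.

Lemma N_tail_pinf e : 0 < e -> exists A, forall u v, A <= u -> u <= v -> N v - N u < e.
Proof.
  destruct N_increments_bounded as [B HB].
  exact (nondecreasing_tail_small N B N_nondecreasing HB e).
Qed.

Lemma N_tail_minf e : 0 < e -> exists A, forall u v, u <= v -> v <= A -> N v - N u < e.
Proof.
  destruct N_increments_bounded as [B HB].
  exact (nondecreasing_tail_small_minf N B N_nondecreasing HB e).
Qed.

Lemma weighted_integral_dist_le u v phi psi eta J J' : u <= v ->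
  (forall y, u <= y <= v -> Rabs (phi y - psi y) <= eta) ->
  McS_int (fun y => phi y * g y) u v J -> McS_int (fun y => psi y * g y) u v J' ->
  Rabs (J - J') <= eta * (N v - N u).
Proof.
  intros Huv Hclose HJ HJ'.
  assert (Hpt : forall y, u <= y <= v -> Rabs (phi y * g y - psi y * g y) <= eta * Rabs (g y)).
  { intros y Hy. replace (phi y * g y - psi y * g y) with ((phi y - psi y) * g y) by ring.
    rewrite Rabs_mult. apply Rmult_le_compat_r; [apply Rabs_pos | auto]. }
  assert (Hsum : forall k,
            McS_int (fun y => psi y * g y + k * Rabs (g y)) u v (J' + k * (N v - N u)))
    by (intros k; apply McS_int_plus, McS_int_scal; auto).
  apply Rabs_le. split.
  - assert (J' + - eta * (N v - N u) <= J); [|lra].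
    apply (McS_int_le _ _ u v _ _ Huv) with (2 := Hsum (- eta)) (3 := HJ).
    intros y Hy. pose proof (Rabs_le_between _ _ (Hpt y Hy)). lra.
  - assert (J <= J' + eta * (N v - N u)); [|lra].
    apply (McS_int_le _ _ u v _ _ Huv) with (2 := HJ) (3 := Hsum eta).
    intros y Hy. pose proof (Rabs_le_between _ _ (Hpt y Hy)). lra.
Qed.

Lemma G_increment_abs_le u v : u <= v -> Rabs (G v - G u) <= N v - N u.
Proof.
  intros Huv.
  replace (Rabs (G v - G u)) with (Rabs (G v - G u - 0 * (G v - G u))) by (f_equal; ring).
  rewrite <- (Rmult_1_l (N v - N u)).
  apply (weighted_integral_dist_le u v (fun _ => 1) (fun _ => 0)); auto.
  - intros y _. rewrite Rminus_0_r, Rabs_R1. lra.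
  - apply (McS_int_ext g); [intros; ring | apply G_primitive; auto].
  - apply McS_int_scal, G_primitive; auto.
Qed.

Lemma G_lim_pinf : exists Ginf, lim_pinf G Ginf.
Proof.
  apply lim_pinf_of_cauchy. intros e He. destruct (N_tail_pinf e He) as [A HA].
  exists A. intros u v Hu Hv. destruct (Rle_dec u v) as [Huv|Hvu].
  - rewrite <- Rabs_Ropp, Ropp_minus_distr.
    eapply Rle_lt_trans; [apply G_increment_abs_le | apply HA]; auto.
  - eapply Rle_lt_trans; [apply G_increment_abs_le | apply HA]; lra.
Qed.

Lemma weighted_integrable (phi : R -> R) (M : R) :
  (forall y, Rabs (phi y) <= M) ->
  (forall e, 0 < e ->
     exists r, 0 < r /\ forall y y', Rabs (y - y') < r -> Rabs (phi y - phi y') < e) ->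
  forall a b, a <= b -> exists J, McS_int (fun y => phi y * g y) a b J.
Proof.
  intros hM hU a b Hab. apply McS_integrable_of_oscillation; auto. intros e He.
  assert (HM0 : 0 <= M) by (eapply Rle_trans; [apply Rabs_pos | apply (hM 0)]).
  destruct (N_increment_mul_small a b (e / 2) Hab ltac:(lra)) as [eta [Heta HetaN]].
  destruct (hU eta Heta) as [r [Hr Hosc]].
  destruct (saks_henstock_both_tags g G a b G_primitive Hab (e / 2 / (M + 1))
              (div_succ_pos M (e / 2) HM0 ltac:(lra))) as [d [Hd Hsh]].
  exists (fun x => Rmin (d x) (r / 2)). split; [apply Rmin_gauge_pos; auto; intros; lra|].
  intros Q Hc1 Hf1 Hf2.
  specialize (Hsh Q Hc1 (mcshane_fine_mono _ _ _ _ _ (fun x => Rmin_l _ _) Hf1)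
                        (mcshane_fine_mono _ _ _ _ _ (fun x => Rmin_l _ _) Hf2)).
  set (SH := lsum (fun q => Rabs (deviation g G (proj_tag1 q))
                            + Rabs (deviation g G (proj_tag2 q))) Q) in Hsh.
  apply Rle_lt_trans with (M * SH + eta * lsum (increment N) (map proj_tag1 Q)).
  - unfold SH. rewrite lsum_map, <- lsum_scal, <- lsum_scal, <- lsum_plus. apply lsum_le.
    intros [[[u v] s] t] Hi. simpl.
    destruct (chain_in a b _ u v s Hc1 (in_map proj_tag1 _ _ Hi)) as [_ [Huv _]].
    destruct (Hf1 u v s (in_map proj_tag1 _ _ Hi)) as [_ [Hs1 Hs2]].
    destruct (Hf2 u v t (in_map proj_tag2 _ _ Hi)) as [_ [Ht1 Ht2]].
    pose proof (Rmin_r (d s) (r / 2)). pose proof (Rmin_r (d t) (r / 2)).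
    specialize (Hosc s t ltac:(apply Rabs_def1; lra)).
    eapply Rle_trans; [apply (weighted_term_diff_le phi g G)|].
    rewrite Rmult_plus_distr_l. apply Rplus_le_compat; [apply Rplus_le_compat|].
    + apply Rmult_le_compat_r; [apply Rabs_pos | auto].
    + apply Rmult_le_compat_r; [apply Rabs_pos | auto].
    + apply Rmult_le_compat; try apply Rabs_pos; [lra | apply G_increment_abs_le; lra].
  - rewrite (lsum_increment_chain N a b _ Hc1).
    pose proof (mul_div_succ_lt M (e / 2) HM0 ltac:(lra)).
    assert (M * SH <= M * (e / 2 / (M + 1))) by (apply Rmult_le_compat_l; auto).
    lra.
Qed.

End WithAbsPrimitive.
End IntegrableFunction.

(** * The convolution *)

Section Convolution.
Variables (F g G N : R -> R) (Finf : R).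
Hypothesis hFc : continuity F.
Hypothesis hFp : lim_pinf F Finf.
Hypothesis hF0 : lim_minf F 0.
Hypothesis hg : L1 g.
Hypothesis hG : forall x, Leb_int_lower g x (G x).
Hypothesis hN : is_primitive (fun y => Rabs (g y)) N.

Lemma reflected_uniformly_continuous x : forall e, 0 < e ->
  exists r, 0 < r /\ forall y y', Rabs (y - y') < r -> Rabs (F (x - y) - F (x - y')) < e.
Proof.
  intros e He. destruct (uniformly_continuous_of_limits F Finf 0 hFc hFp hF0 e He) as [r [Hr H]].
  exists r. split; auto. intros y y' Hy. apply H.
  replace (x - y - (x - y')) with (- (y - y')) by ring. rewrite Rabs_Ropp; auto.
Qed.

Lemma reflected_weighted_integrable x a b : a <= b ->
  exists J, McS_int (fun y => F (x - y) * g y) a b J.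
Proof.
  destruct (bounded_of_limits F Finf 0 hFc hFp hF0) as [MF HMF].
  exact (weighted_integrable g G hg hG N hN (fun y => F (x - y)) MF (fun y => HMF _)
           (reflected_uniformly_continuous x) a b).
Qed.

Section Primitives.
Variable P : R -> R -> R.
Hypothesis hP : forall x, is_primitive (fun y => F (x - y) * g y) (P x).

Lemma P_increment_le : exists K, 0 <= K /\
  forall x u v, u <= v -> Rabs (P x v - P x u) <= K * (N v - N u).
Proof.
  destruct (bounded_of_limits F Finf 0 hFc hFp hF0) as [MF HMF].
  exists MF. split; [eapply Rle_trans; [apply Rabs_pos | apply (HMF 0)]|].
  intros x u v Huv.
  replace (P x v - P x u) with (P x v - P x u - 0 * (G v - G u)) by ring.
  apply (weighted_integral_dist_le g N hN u v (fun y => F (x - y)) (fun _ => 0));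
    [exact Huv | | apply hP, Huv |].
  - intros y _. rewrite Rminus_0_r. apply HMF.
  - exact (McS_int_scal 0 _ _ _ _ (G_primitive g G hg hG u v Huv)).
Qed.

Lemma P_tail_pinf e : 0 < e ->
  exists A, forall x u v, A <= u -> u <= v -> Rabs (P x v - P x u) < e.
Proof.
  intros He. destruct P_increment_le as [K [HK HP]].
  destruct (N_tail_pinf g hg N hN (e / (K + 1)) (div_succ_pos K e HK He)) as [A HA].
  exists A. intros x u v Hu Huv. eapply Rle_lt_trans; [apply HP; auto|].
  eapply Rle_lt_trans; [apply Rmult_le_compat_l; [exact HK | left; apply HA; auto]|].
  apply mul_div_succ_lt; auto.
Qed.

Lemma P_tail_minf e : 0 < e ->
  exists A, forall x u v, u <= v -> v <= A -> Rabs (P x v - P x u) < e.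
Proof.
  intros He. destruct P_increment_le as [K [HK HP]].
  destruct (N_tail_minf g hg N hN (e / (K + 1)) (div_succ_pos K e HK He)) as [A HA].
  exists A. intros x u v Huv Hv. eapply Rle_lt_trans; [apply HP; auto|].
  eapply Rle_lt_trans; [apply Rmult_le_compat_l; [exact HK | left; apply HA; auto]|].
  apply mul_div_succ_lt; auto.
Qed.

Lemma P_lim_pinf x : exists l, lim_pinf (P x) l.
Proof.
  apply lim_pinf_of_cauchy. intros e He. destruct (P_tail_pinf e He) as [A HA].
  exists A. intros u v Hu Hv. destruct (Rle_dec u v).
  - rewrite <- Rabs_Ropp, Ropp_minus_distr. apply HA; auto.
  - apply HA; lra.
Qed.

Lemma P_lim_minf x : exists l, lim_minf (P x) l.
Proof.
  apply lim_minf_of_cauchy. intros e He. destruct (P_tail_minf e He) as [A HA].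
  exists A. intros u v Hu Hv. destruct (Rle_dec u v).
  - rewrite <- Rabs_Ropp, Ropp_minus_distr. apply HA; auto.
  - apply HA; lra.
Qed.

Section Limits.
Variables Lp Lm : R -> R.
Hypothesis hLp : forall x, lim_pinf (P x) (Lp x).
Hypothesis hLm : forall x, lim_minf (P x) (Lm x).

Definition convolution (x : R) : R := Lp x - Lm x.

Lemma convolution_tail e : 0 < e -> exists M0, 0 <= M0 /\
  forall x a b, a < - M0 -> M0 < b -> Rabs (convolution x - (P x b - P x a)) <= e.
Proof.
  intros He.
  destruct (P_tail_pinf (e / 2) ltac:(lra)) as [Ap HAp].
  destruct (P_tail_minf (e / 2) ltac:(lra)) as [Am HAm].
  exists (Rabs Am + Rabs Ap). pose proof (Rabs_pos Am). pose proof (Rabs_pos Ap).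
  split; [lra|]. intros x a b Ha Hb.
  pose proof (Rle_abs Ap). pose proof (Rle_abs (- Am)). rewrite Rabs_Ropp in *.
  assert (Qp : Rabs (Lp x - P x b) <= e / 2).
  { apply (lim_pinf_dist_le (P x) _ b); auto. intros y Hy. left; apply HAp; lra. }
  assert (Qm : Rabs (Lm x - P x a) <= e / 2).
  { apply (lim_minf_dist_le (P x) _ a); auto. intros y Hy.
    rewrite <- Rabs_Ropp, Ropp_minus_distr. left; apply HAm; lra. }
  unfold convolution.
  replace (Lp x - Lm x - (P x b - P x a)) with ((Lp x - P x b) - (Lm x - P x a)) by ring.
  eapply Rle_trans; [apply Rabs_triang|]. rewrite Rabs_Ropp. lra.
Qed.

Lemma convolution_Leb_int_R x : Leb_int_R (fun y => F (x - y) * g y) (convolution x).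
Proof.
  destruct (bounded_of_limits F Finf 0 hFc hFp hF0) as [MF HMF].
  split; [split|].
  - intros a b Hab. exists (P x b - P x a). apply hP; auto.
  - destruct (proj2 hg) as [B HB]. exists (MF * B). intros a b J Hab HJ.
    destruct (abs_integrable g G hg hG a b Hab) as [Jg HJg].
    assert (Hle : J <= MF * Jg).
    { apply (McS_int_le _ _ a b _ _ Hab) with (2 := HJ) (3 := McS_int_scal MF _ _ _ _ HJg).
      intros y _. rewrite Rabs_mult. apply Rmult_le_compat_r; [apply Rabs_pos | auto]. }
    assert (MF * Jg <= MF * B); [|lra].
    apply Rmult_le_compat_l;
      [eapply Rle_trans; [apply Rabs_pos | apply (HMF 0)] | apply (HB a b); auto].
  - intros e He. destruct (convolution_tail (e / 2) ltac:(lra)) as [M0 [HM0 HM]]. exists M0.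
    intros a b J Ha Hb HJ.
    rewrite (McS_int_unique _ a b J (P x b - P x a) ltac:(lra) HJ (hP x a b ltac:(lra))).
    specialize (HM x a b Ha Hb). rewrite <- Rabs_Ropp, Ropp_minus_distr. lra.
Qed.

Lemma convolution_dist_le e : 0 < e -> exists M0, 0 <= M0 /\ forall a b, a < - M0 -> M0 < b ->
  forall x psi eta J, (forall y, a <= y <= b -> Rabs (F (x - y) - psi y) <= eta) ->
  McS_int (fun y => psi y * g y) a b J -> Rabs (convolution x - J) <= e + eta * (N b - N a).
Proof.
  intros He. destruct (convolution_tail e He) as [M0 [HM0 HM]].
  exists M0. split; [exact HM0|]. intros a b Ha Hb x psi eta J Hclose HJ.
  pose proof (weighted_integral_dist_le g N hN a b (fun y => F (x - y)) psi eta _ _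
                ltac:(lra) Hclose (hP x a b ltac:(lra)) HJ).
  specialize (HM x a b Ha Hb).
  replace (convolution x - J)
    with ((convolution x - (P x b - P x a)) + (P x b - P x a - J)) by ring.
  eapply Rle_trans; [apply Rabs_triang | lra].
Qed.

Lemma reflected_stieltjes x a b : a <= b ->
  HS_int (fun y => Finf - F (x - y)) G a b (Finf * (G b - G a) - (P x b - P x a)).
Proof.
  intros Hab. destruct (bounded_of_limits F Finf 0 hFc hFp hF0) as [MF HMF].
  exact (weighted_stieltjes g G hg hG (fun y => F (x - y)) MF a b Finf _ (fun y => HMF _) Hab
           (hP x a b Hab)).
Qed.
Lemma convolution_AC_BV x : conv_AC_BV F G x (convolution x).
Proof.
  destruct (G_lim_pinf g G hg hG N hN) as [Ginf hGp].
  exists Finf, Ginf. split; [auto|]. split; [auto|]. split.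
  - intros a b Hab. eexists. apply reflected_stieltjes; auto.
  - intros e He. pose proof (Rabs_pos Finf) as HF.
    set (e1 := e / 3 / (Rabs Finf + 1)).
    assert (He1 : 0 < e1) by (apply div_succ_pos; lra).
    pose proof (mul_div_succ_lt (Rabs Finf) (e / 3) HF ltac:(lra)) as Hk. fold e1 in Hk.
    destruct (convolution_tail (e / 3) ltac:(lra)) as [M0 [HM0 HM]].
    destruct (hGp e1 He1) as [M1 HM1]. destruct (G_lim_minf g G hg hG e1 He1) as [M2 HM2].
    exists (Rmax M0 (Rmax (Rabs M1) (Rabs M2))). intros a b J Ha Hb HJ.
    pose proof (Rmax_l M0 (Rmax (Rabs M1) (Rabs M2))).
    pose proof (Rmax_r M0 (Rmax (Rabs M1) (Rabs M2))).
    pose proof (Rmax_l (Rabs M1) (Rabs M2)). pose proof (Rmax_r (Rabs M1) (Rabs M2)).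
    pose proof (Rle_abs M1). pose proof (Rle_abs (- M2)). rewrite Rabs_Ropp in *.
    rewrite (HS_int_unique _ _ a b J _ ltac:(lra) HJ (reflected_stieltjes x a b ltac:(lra))).
    specialize (HM x a b ltac:(lra) ltac:(lra)). specialize (HM1 b ltac:(lra)).
    specialize (HM2 a ltac:(lra)). rewrite Rminus_0_r in HM2.
    replace (Finf * (G b - G a) - (P x b - P x a) - (Finf * Ginf - convolution x))
      with (Finf * (G b - Ginf) - Finf * G a + (convolution x - (P x b - P x a))) by ring.
    eapply Rle_lt_trans; [apply Rabs_triang|].
    eapply Rle_lt_trans; [apply Rplus_le_compat_r, Rabs_triang|]. rewrite Rabs_Ropp, !Rabs_mult.
    assert (Rabs Finf * Rabs (G b - Ginf) <= Rabs Finf * e1) by (apply Rmult_le_compat_l; lra).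
    assert (Rabs Finf * Rabs (G a) <= Rabs Finf * e1) by (apply Rmult_le_compat_l; lra).
    lra.
Qed.

Lemma convolution_continuous : continuity convolution.
Proof.
  intros x0. unfold continuity_pt, continue_in, limit1_in, limit_in. simpl. unfold R_dist.
  intros e He.
  destruct (convolution_dist_le (e / 4) ltac:(lra)) as [M [HM0 HM]].
  set (a := - M - 1). set (b := M + 1).
  destruct (N_increment_mul_small g N hN a b (e / 4) ltac:(unfold a, b; lra) ltac:(lra))
    as [eta [Heta HetaN]].
  destruct (uniformly_continuous_of_limits F Finf 0 hFc hFp hF0 eta Heta) as [r [Hr Hunif]].
  exists r. split; [exact Hr|]. intros x [_ Hx].
  assert (Hclose : forall y, a <= y <= b -> Rabs (F (x - y) - F (x0 - y)) <= eta).
  { intros y _. left. apply Hunif. replace (x - y - (x0 - y)) with (x - x0) by ring. exact Hx. }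
  assert (Hclose0 : forall y, a <= y <= b -> Rabs (F (x0 - y) - F (x0 - y)) <= eta).
  { intros y _. rewrite Rminus_diag, Rabs_R0. lra. }
  assert (Hab : a <= b) by (unfold a, b; lra).
  pose proof (HM a b ltac:(unfold a; lra) ltac:(unfold b; lra) x _ _ _ Hclose (hP x0 a b Hab)).
  pose proof (HM a b ltac:(unfold a; lra) ltac:(unfold b; lra) x0 _ _ _ Hclose0 (hP x0 a b Hab)).
  replace (convolution x - convolution x0)
    with ((convolution x - (P x0 b - P x0 a)) - (convolution x0 - (P x0 b - P x0 a))) by ring.
  eapply Rle_lt_trans; [apply Rabs_triang|]. rewrite Rabs_Ropp. lra.
Qed.

Lemma convolution_lim_minf : lim_minf convolution 0.
Proof.
  intros e He. destruct (convolution_dist_le (e / 2) ltac:(lra)) as [M [HM0 HM]].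
  set (a := - M - 1). set (b := M + 1). assert (Hab : a <= b) by (unfold a, b; lra).
  destruct (N_increment_mul_small g N hN a b (e / 2) Hab ltac:(lra)) as [eta [Heta HetaN]].
  destruct (hF0 eta Heta) as [RF HRF].
  exists (a + RF). intros x Hx.
  assert (Hclose : forall y, a <= y <= b -> Rabs (F (x - y) - 0) <= eta)
    by (intros y Hy; left; apply HRF; lra).
  pose proof (HM a b ltac:(unfold a; lra) ltac:(unfold b; lra) x (fun _ => 0) _ _ Hclose
                (McS_int_scal 0 _ _ _ _ (G_primitive g G hg hG a b Hab))).
  rewrite Rmult_0_l, Rminus_0_r in *. lra.
Qed.

(* The interval [a, b] is fixed first, far enough for [G] to be near its limits
   at its ends; then [x] is taken large enough for [F (x - .)] to be near [Finf]
   on it. *)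
Lemma convolution_lim_pinf : exists l, lim_pinf convolution l.
Proof.
  destruct (G_lim_pinf g G hg hG N hN) as [Ginf hGp].
  exists (Finf * Ginf). intros e He. pose proof (Rabs_pos Finf) as HF.
  set (e1 := e / 4 / (Rabs Finf + 1)).
  assert (He1 : 0 < e1) by (apply div_succ_pos; lra).
  pose proof (mul_div_succ_lt (Rabs Finf) (e / 4) HF ltac:(lra)) as Hk. fold e1 in Hk.
  destruct (convolution_dist_le (e / 4) ltac:(lra)) as [M [HM0 HM]].
  destruct (hGp e1 He1) as [M1 HM1]. destruct (G_lim_minf g G hg hG e1 He1) as [M2 HM2].
  pose proof (Rmax_l M M1). pose proof (Rmax_r M M1).
  pose proof (Rmin_l (- M) M2). pose proof (Rmin_r (- M) M2).
  set (b := Rmax M M1 + 1). set (a := Rmin (- M) M2 - 1).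
  assert (Hab : a <= b) by (unfold a, b; lra).
  destruct (N_increment_mul_small g N hN a b (e / 4) Hab ltac:(lra)) as [eta [Heta HetaN]].
  destruct (hFp eta Heta) as [RF HRF].
  exists (b + RF). intros x Hx.
  assert (Hclose : forall y, a <= y <= b -> Rabs (F (x - y) - Finf) <= eta)
    by (intros y Hy; left; apply HRF; lra).
  pose proof (HM a b ltac:(unfold a; lra) ltac:(unfold b; lra) x (fun _ => Finf) _ _ Hclose
                (McS_int_scal Finf _ _ _ _ (G_primitive g G hg hG a b Hab))).
  specialize (HM1 b ltac:(unfold b; lra)). specialize (HM2 a ltac:(unfold a; lra)).
  rewrite Rminus_0_r in HM2.
  replace (convolution x - Finf * Ginf)
    with ((convolution x - Finf * (G b - G a)) + (Finf * (G b - Ginf) - Finf * G a)) by ring.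
  eapply Rle_lt_trans; [apply Rabs_triang|].
  eapply Rle_lt_trans; [apply Rplus_le_compat_l, Rabs_triang|]. rewrite Rabs_Ropp, !Rabs_mult.
  assert (Rabs Finf * Rabs (G b - Ginf) <= Rabs Finf * e1) by (apply Rmult_le_compat_l; lra).
  assert (Rabs Finf * Rabs (G a) <= Rabs Finf * e1) by (apply Rmult_le_compat_l; lra).
  lra.
Qed.

End Limits.
End Primitives.
End Convolution.

Theorem mainTheorem13 (F g G : R -> R)
  (hF : in_BC F)
  (hg : L1 g)
  (hG : forall x, Leb_int_lower g x (G x)) :
  exists conv : R -> R,
    (forall x, conv_AC_BV F G x (conv x)) /\
    C0bar conv /\
    (forall x, Leb_int_R (fun y => F (x - y) * g y) (conv x)).
Proof.
  destruct hF as [[hFc [[Finf hFp] _]] hF0].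
  destruct (McS_int_primitive _ (abs_integrable g G hg hG)) as [N hN].
  destruct (functional_choice (fun x Px => is_primitive (fun y => F (x - y) * g y) Px)) as [P hP].
  { intros x. apply McS_int_primitive. eapply reflected_weighted_integrable; eauto. }
  destruct (functional_choice (fun x l => lim_pinf (P x) l)) as [Lp hLp].
  { intros x. eapply P_lim_pinf; eauto. }
  destruct (functional_choice (fun x l => lim_minf (P x) l)) as [Lm hLm].
  { intros x. eapply P_lim_minf; eauto. }
  exists (convolution Lp Lm). split; [|split; [split; [|split]|]].
  - intros x. eapply convolution_AC_BV; eauto.
  - eapply convolution_continuous; eauto.
  - eapply convolution_lim_pinf; eauto.
  - exists 0. eapply convolution_lim_minf; eauto.
  - intros x. eapply convolution_Leb_int_R; eauto.
Qed.
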